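(* Let $\Omega\subset\mathbb R^2$ be a domain, and let $h\in H_\rho$ be a boundary element whose realization $s_h$ is a single point. Then for every sequence $\{x_m\}\subset\Omega$ with $\rho_{(F,V)}(x_m,h)\to0$, one has $|x_m-s_h|\to0$ as $m\to\infty$.
   Context: The conformal capacity of a condenser is $\mathrm{cap}(F_0,F_1;\Omega)=\inf\int_\Omega|\nabla v|^2dx$, where the infimum is over nonnegative continuous $v$ with square integrable weak gradient, $v=0$ near $F_0$, and $v\ge1$ near $F_1$. Fix a continuum $F\subset\Omega$ and a domain $V$ with $F\subset V\subset\overline V\subset\Omega$, $\overline V$ compact, and $\partial V$ a quasiconformal image of the unit circle. The conformal capacitary metric is $$\rho_{(F,V)}(x,y)=\inf_{l(x,y)}\big\{\mathrm{cap}^{1/2}(F,l\setminus V;\Omega)+\mathrm{cap}^{1/2}(\partial\Omega,l\cap V;\Omega)\big\},$$ where the infimum is over rectifiable curves $l$ in $\Omega$ joining $x$ and $y$. Let $\widetilde\Omega_\rho$ be the completion of $(\Omega,\rho_{(F,V)})$ and $H_\rho=\widetilde\Omega_\rho\setminus\Omega$. For $h\in H_\rho$, let $D(h,\varepsilon)$ denote the $\rho$-ball of radius $\varepsilon$ about $h$ in $\widetilde\Omega_\rho$. The realization (impression) of $h$ is $s_h=\bigcap_{\varepsilon>0}\overline{D(h,\varepsilon)\cap\Omega}\subset\overline{\mathbb R^2}$, where the closure is Euclidean. *)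

From HB Require Import structures.
From mathcomp Require Import all_boot all_order all_algebra.
From mathcomp Require Import all_classical all_reals all_analysis.
Set Implicit Arguments. Unset Strict Implicit. Unset Printing Implicit Defensive.
Import Order.TTheory GRing.Theory Num.Theory.
Import numFieldNormedType.Exports.
Local Open Scope classical_set_scope.
Local Open Scope ring_scope.

Section Defs.
Variable R : realType.
Local Notation P := (R * R)%type.

Definition enorm (p : P) : R := Num.sqrt (p.1 ^+ 2 + p.2 ^+ 2).
Definition pdist (p q : P) : R := enorm (p.1 - q.1, p.2 - q.2).

Definition leb2 := (@lebesgue_measure R \x @lebesgue_measure R)%E.

Definition domain (O : set P) := open O /\ connected O /\ O !=set0.

Definition bdry (O : set P) : set P := closure O `\` interior O.

Definition bounded2 (A : set P) := exists M : R, forall x, A x -> enorm x <= M.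

Definition continuum (F : set P) :=
  compact F /\ connected F /\ exists x y, F x /\ F y /\ x <> y.

(* partial derivatives (b = false: first variable, b = true: second) *)
Definition partial (b : bool) (f : P -> R) : P -> R :=
  fun p => if b then derive1 (fun t => f (p.1, t)) p.2
           else derive1 (fun t => f (t, p.2)) p.1.

Fixpoint dpart (l : seq bool) (f : P -> R) : P -> R :=
  if l is b :: l' then partial b (dpart l' f) else f.

Definition smooth (f : P -> R) :=
  forall l, continuous (dpart l f) /\
    forall p, derivable (fun t => dpart l f (t, p.2)) p.1 1 /\
              derivable (fun t => dpart l f (p.1, t)) p.2 1.

Definition test_fun (O : set P) (phi : P -> R) :=
  smooth phi /\ exists K, compact K /\ K `<=` O /\ forall x, ~ K x -> phi x = 0.

Definition weak_grad_L2 (O : set P) (v g1 g2 : P -> R) :=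
  measurable_fun O g1 /\ measurable_fun O g2 /\
  (\int[leb2]_(x in O) ((g1 x) ^+ 2 + (g2 x) ^+ 2)%:E < +oo)%E /\
  forall phi, test_fun O phi ->
    (\int[leb2]_(x in O) (v x * partial false phi x)%:E
       = - \int[leb2]_(x in O) (g1 x * phi x)%:E)%E /\
    (\int[leb2]_(x in O) (v x * partial true phi x)%:E
       = - \int[leb2]_(x in O) (g2 x * phi x)%:E)%E.

(* "near" a set E (neighbourhood in the plane); for E = boundary of O the
   neighbourhood is taken in the extended plane, i.e. it also contains a
   neighbourhood of infinity (relevant only when O is unbounded). *)
Definition zero_near (O E : set P) (v : P -> R) :=
  exists U, open U /\ E `<=` U /\ forall x, O x -> U x -> v x = 0.
Definition zero_near_bdry (O : set P) (v : P -> R) :=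
  exists U (M : R), open U /\ bdry O `<=` U /\
    forall x, O x -> (U x \/ M < enorm x) -> v x = 0.
Definition ge1_near (O E : set P) (v : P -> R) :=
  exists U, open U /\ E `<=` U /\ forall x, O x -> U x -> 1 <= v x.

Definition admissible_base (O : set P) (v g1 g2 : P -> R) :=
  (forall x, O x -> 0 <= v x) /\ (forall x, O x -> {for x, continuous v}) /\
  weak_grad_L2 O v g1 g2.

Definition energy (O : set P) (g1 g2 : P -> R) : \bar R :=
  (\int[leb2]_(x in O) ((g1 x) ^+ 2 + (g2 x) ^+ 2)%:E)%E.

Definition cap (O F0 F1 : set P) : \bar R :=
  ereal_inf [set e | exists v g1 g2, admissible_base O v g1 g2 /\
     zero_near O F0 v /\ ge1_near O F1 v /\ e = energy O g1 g2].

Definition cap_bdry (O F1 : set P) : \bar R :=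
  ereal_inf [set e | exists v g1 g2, admissible_base O v g1 g2 /\
     zero_near_bdry O v /\ ge1_near O F1 v /\ e = energy O g1 g2].

Definition esqrt (e : \bar R) : \bar R :=
  match e with
  | r%:E => (Num.sqrt r)%:E
  | +oo%E => +oo%E
  | -oo%E => 0%E
  end.

Definition I01 : set R := [set t | 0 <= t <= 1].

Definition rect_curve (O : set P) (x y : P) (gamma : R -> P) :=
  {within I01, continuous gamma} /\
  (forall t, I01 t -> O (gamma t)) /\ gamma 0 = x /\ gamma 1 = y /\
  exists L : R, forall (n : nat) (t : nat -> R),
    t 0%N = 0 -> t n = 1 -> (forall i, (i < n)%N -> t i <= t i.+1) ->
    \sum_(i < n) pdist (gamma (t i.+1)) (gamma (t i)) <= L.

Definition rho (O F V : set P) (x y : P) : \bar R :=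
  ereal_inf [set e | exists gamma, rect_curve O x y gamma /\
    let l := gamma @` I01 in
    e = (esqrt (cap O F (l `\` V)) + esqrt (cap_bdry O (l `&` V)))%E].

(* Boundary elements h of the completion, represented by rho-Cauchy
   sequences in O having no rho-limit in O. *)
Definition rho_cauchy (O F V : set P) (a : nat -> P) :=
  (forall n, O (a n)) /\
  forall eps : R, 0 < eps -> exists N, forall m n, (N <= m)%N -> (N <= n)%N ->
    (rho O F V (a m) (a n) < eps%:E)%E.

Definition bdry_elt (O F V : set P) (a : nat -> P) :=
  rho_cauchy O F V a /\
  ~ exists y, O y /\ ((rho O F V (a n) y) @[n --> \oo] --> 0%E).

(* distance in the completion from a point x of O to h = [a] *)
Definition rho_h (O F V : set P) (a : nat -> P) (x : P) : \bar R :=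
  limn (fun n => rho O F V x (a n)).

Definition Dh (O F V : set P) (a : nat -> P) (eps : R) : set P :=
  [set x | O x /\ (rho_h O F V a x < eps%:E)%E].

(* finite part of the realization s_h *)
Definition s_h_fin (O F V : set P) (a : nat -> P) : set P :=
  [set y | forall eps : R, 0 < eps -> closure (Dh O F V a eps) y].
(* infinity belongs to s_h *)
Definition s_h_inf (O F V : set P) (a : nat -> P) : Prop :=
  forall eps : R, 0 < eps -> ~ bounded2 (Dh O F V a eps).

Definition quasiconformal (f : P -> P) :=
  continuous f /\ bijective f /\
  (exists g, cancel f g /\ cancel g f /\ continuous g) /\
  exists H : R, forall x, \forall r \near 0^'+,
    (forall y z, pdist y x = r -> pdist z x = r ->
      pdist (f y) (f x) <= H * pdist (f z) (f x)).

Definition unit_circle : set P := [set p | enorm p = 1].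

Definition admissible_V (O F V : set P) :=
  domain V /\ F `<=` V /\ closure V `<=` O /\ compact (closure V) /\
  exists f, quasiconformal f /\ bdry V = f @` unit_circle.

End Defs.

(** The realization of h misses infinity, so some D(h, eps0) ∩ Ω is bounded
    and hence lies in a compact square.  A sequence with rho(x_m, h) -> 0
    eventually enters every D(h, eps), so it is eventually in the square, and
    each of its cluster points lies in every closure of D(h, eps) ∩ Ω, i.e. in
    s_h = {p}.  A sequence eventually in a compact set whose only cluster
    point is p converges to p. *)
From HB Require Import structures.
From mathcomp Require Import all_boot all_order all_algebra.
From mathcomp Require Import all_classical all_reals all_analysis.
From mathcomp Require Import lra.
Import Order.TTheory GRing.Theory Num.Theory.
Import numFieldNormedType.Exports.
Local Open Scope classical_set_scope.
Local Open Scope ring_scope.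

Section PlaneGeometry.
Context {R : realType}.
Local Notation P := (R * R)%type.

Lemma ler_norm_sqrt_sqrD (a b : R) : `|a| <= Num.sqrt (a ^+ 2 + b ^+ 2).
Proof. by rewrite -sqrtr_sqr ler_sqrt ?addr_ge0 ?sqr_ge0 // lerDl sqr_ge0. Qed.

Lemma sqrt_sqrD_le_normD (a b : R) : Num.sqrt (a ^+ 2 + b ^+ 2) <= `|a| + `|b|.
Proof.
rewrite -(@ger0_norm _ (`|a| + `|b|)) ?addr_ge0 //.
rewrite -sqrtr_sqr ler_sqrt ?sqr_ge0 // sqrrD !real_normK ?num_real //.
by rewrite -addrA lerD2l lerDr mulrn_wge0 // mulr_ge0.
Qed.

Definition square (N : R) : set P := `[- N, N] `*` `[- N, N].

Lemma square_compact (N : R) : compact (square N).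
Proof. by apply: compact_setX; exact: segment_compact. Qed.

Lemma squareP (N : R) (q : P) : `|q.1| <= N -> `|q.2| <= N -> square N q.
Proof. by move=> q1 q2; split; rewrite /= in_itv /= -ler_norml. Qed.

Lemma bounded2_sub_square_nbhs (p : P) (A : set P) :
  bounded2 A -> exists N, A `<=` square N /\ nbhs p (square N).
Proof.
move=> [M AM]; exists (`|M| + `|p.1| + `|p.2| + 1).
have [M0 M1 p10 p20] :=
  And4 (ler_norm M) (normr_ge0 M) (normr_ge0 p.1) (normr_ge0 p.2).
split.
- move=> q /AM; rewrite /enorm => qM.
  have q1 := ler_norm_sqrt_sqrD q.1 q.2.
  have q2 := ler_norm_sqrt_sqrD q.2 q.1; rewrite addrC in q2.
  apply: squareP; lra.
- apply: filterS (nbhsx_ballx p 1 ltr01) => -[u v] [d1 d2].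
  rewrite /ball /= in d1 d2.
  have u1 := ler_normD (u - p.1) p.1; rewrite subrK distrC in u1.
  have v1 := ler_normD (v - p.2) p.2; rewrite subrK distrC in v1.
  apply: squareP => /=; lra.
Qed.

Lemma cvg_pdist (T : Type) (G : set_system T) (FG : Filter G) (x : T -> P)
    (p : P) :
  x @ G --> p -> pdist (x t) p @[t --> G] --> 0.
Proof.
move=> xp; apply/cvgrPdist_lt => e e0.
have e2 : 0 < e / 2 by lra.
have : \forall t \near G, ball p (e / 2) (x t) by exact/xp/nbhsx_ballx.
apply: filterS => t [d1 d2].
rewrite /ball /= in d1 d2.
rewrite /pdist /enorm /= sub0r normrN ger0_norm ?sqrtr_ge0 //.
have := sqrt_sqrD_le_normD ((x t).1 - p.1) ((x t).2 - p.2).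
rewrite distrC in d1; rewrite distrC in d2; lra.
Qed.

End PlaneGeometry.

Section Realization.
Context {R : realType} {O F V : set (R * R)} {a : nat -> R * R}.

Lemma not_s_h_inf_bounded :
  ~ s_h_inf O F V a -> exists2 eps : R, 0 < eps & bounded2 (Dh O F V a eps).
Proof.
move=> shinf; apply: contrapT => noD; apply: shinf => eps eps0 bD.
by apply: noD; exists eps.
Qed.

Lemma near_Dh (x : nat -> R * R) (eps : R) : 0 < eps ->
  (forall m, O (x m)) -> ((rho_h O F V a (x m)) @[m --> \oo] --> 0%E) ->
  \forall m \near \oo, Dh O F V a eps (x m).
Proof.
move=> eps0 Ox x0; have : \forall m \near \oo, (rho_h O F V a (x m) < eps%:E)%E.
  by apply: (x0 [set u | (u < eps%:E)%E]); exact: open_ereal_lt'.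
by apply: filterS => m; split.
Qed.

Lemma cluster_sub_s_h_fin (T : Type) (G : set_system T) (x : T -> R * R) :
  (forall eps : R, 0 < eps -> (x @ G) (Dh O F V a eps)) ->
  cluster (x @ G) `<=` s_h_fin O F V a.
Proof. by move=> xD y xy eps eps0 B B0; exact: xy (xD eps eps0) B0. Qed.

End Realization.

Theorem lemma2p14 (R : realType) (O F V : set (R * R)) (a : nat -> R * R)
  (p : R * R) (x : nat -> R * R) :
  domain O -> continuum F -> F `<=` O -> admissible_V O F V ->
  bdry_elt O F V a ->
  s_h_fin O F V a = [set p] -> ~ s_h_inf O F V a ->
  (forall m, O (x m)) ->
  ((rho_h O F V a (x m)) @[m --> \oo] --> 0%E) ->
  ((pdist (x m) p) @[m --> \oo] --> 0).
Proof.
move=> _ _ _ _ _ sh shinf Ox x0; apply: cvg_pdist.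
have xD eps : 0 < eps -> (x @ \oo) (Dh O F V a eps).
  by move=> eps0; exact: near_Dh.
have clp : cluster (x @ \oo) `<=` [set p].
  by rewrite -sh; exact: cluster_sub_s_h_fin.
have [eps0 eps00 /(bounded2_sub_square_nbhs p) [N [DN pN]]] :=
  not_s_h_inf_bounded shinf.
have xN : (x @ \oo) (square N) by apply: filterS DN (xD _ eps00).
apply: (compact_cluster_set1 _ (square_compact N) pN) => //.
apply/seteqP; split; first exact: clp.
move=> _ ->; have [z [_ xz]] := square_compact N (x @ \oo) _ xN.
by rewrite -(clp z xz).
Qed.
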